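(* Let $\tilde\Gamma$ be a finitely generated group. Then $|G|$ divides $\#\mathrm{Hom}(\tilde\Gamma,G)$ for every finite group $G$ if and only if the abelianization $\tilde\Gamma/[\tilde\Gamma,\tilde\Gamma]$ is infinite. *)

From HB Require Import structures.
From mathcomp Require Import all_boot all_fingroup.
Set Implicit Arguments. Unset Strict Implicit. Unset Printing Implicit Defensive.
Local Open Scope group_scope.

Inductive in_gen (Gam : groupType) (s : seq Gam) : Gam -> Prop :=
  | in_gen_mem x : x \in s -> in_gen s x
  | in_gen_one : in_gen s 1
  | in_gen_inv x : in_gen s x -> in_gen s x^-1
  | in_gen_mul x y : in_gen s x -> in_gen s y -> in_gen s (x * y).

Definition finitely_generated (Gam : groupType) : Prop :=
  exists s : seq Gam, forall x : Gam, in_gen s x.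

Inductive in_derived (Gam : groupType) : Gam -> Prop :=
  | in_derived_comm x y : in_derived [~ x, y]
  | in_derived_one : in_derived 1
  | in_derived_inv x : in_derived x -> in_derived x^-1
  | in_derived_mul x y : in_derived x -> in_derived y -> in_derived (x * y).

Definition abelianization_finite (Gam : groupType) : Prop :=
  exists reps : seq Gam, forall x : Gam,
    exists2 r, r \in reps & in_derived (x * r^-1).

Definition is_hom (Gam H : groupType) (f : Gam -> H) : Prop :=
  forall x y, f (x * y) = f x * f y.

(* #Hom(Gam, G) = N : the homomorphisms (up to extensional equality)
   are enumerated bijectively by 'I_N. *)
Definition hom_card (Gam : groupType) (gT : finGroupType) (N : nat) : Prop :=
  exists fs : 'I_N -> (Gam -> gT),
    [/\ forall i, is_hom (fs i),
        forall i j, (forall x, fs i x = fs j x) -> i = j &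
        forall f : Gam -> gT, is_hom f -> exists i, forall x, f x = fs i x].

From HB Require Import structures.
From mathcomp Require Import all_boot all_order all_fingroup all_algebra.
From mathcomp Require Import cyclic ring zify boolp.
Set Implicit Arguments. Unset Strict Implicit. Unset Printing Implicit Defensive.
Import Order.TTheory GRing.Theory Num.Theory.

(* (=>) If Gam/[Gam,Gam] has m elements, take a prime p > m.  A homomorphism
   to Z/p factors through the abelianization, so its image has fewer than p
   elements and is trivial; thus #Hom(Gam, Z/p) = 1 is not divisible by p.

   (<=) Writing elements of Gam as words in n generators, the exponent vectors
   of words lying in [Gam,Gam] form a subgroup of Z^n, of infinite index since
   the abelianization is infinite.  Such a subgroup is killed by a nonzero
   integer functional (proved by induction on n), which yields a nonzero
   homomorphism Gam -> Z; dividing by the generator of its image gives a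
   surjection psi : Gam -> Z with psi t = 1.  Then Gam = K >| <t>, K = ker psi,
   and a homomorphism f : Gam -> G is the same as f|K together with an image
   g of t conjugating f|K as t does.  Grouping homomorphisms according to the
   G-conjugacy class of their restriction to K, each block has exactly |G|
   elements: for fixed f|K the admissible g form a coset of the centralizer
   C of f(K), and so do the elements conjugating f|K to a given conjugate. *)

Section IntegerVectors.
Local Open Scope ring_scope.
Implicit Types (a b x y w : seq int) (k : int).

Fixpoint vadd a b : seq int :=
  match a, b with u :: a', v :: b' => (u + v) :: vadd a' b' | _, _ => [::] end.
Definition vscale k a : seq int := map ( *%R k) a.
Definition vsub a b : seq int := vadd a (vscale (-1) b).
Fixpoint dot a b : int :=
  match a, b with u :: a', v :: b' => u * v + dot a' b' | _, _ => 0 end.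

Lemma size_vadd a b : size a = size b -> size (vadd a b) = size a.
Proof. by elim: a b => [|u a IH] [|v b] //= [] /IH ->. Qed.

Lemma size_vscale k a : size (vscale k a) = size a.
Proof. exact: size_map. Qed.

Lemma vscale0 a : vscale 0 a = nseq (size a) 0.
Proof. by elim: a => //= u a ->; rewrite mul0r. Qed.

Lemma vscale1 a : vscale 1 a = a.
Proof. by elim: a => //= u a ->; rewrite mul1r. Qed.

Lemma vscaleDl k k' a : vscale (k + k') a = vadd (vscale k a) (vscale k' a).
Proof. by elim: a => //= u a ->; rewrite mulrDl. Qed.

Lemma nth_vadd a b i : size a = size b ->
  nth 0 (vadd a b) i = nth 0 a i + nth 0 b i.
Proof. by elim: a b i => [|u a IH] [|v b] [|i] //= [] /IH. Qed.

Lemma nth_vscale k a i : nth 0 (vscale k a) i = k * nth 0 a i.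
Proof. by elim: a i => [|u a IH] [|i] //=; rewrite mulr0. Qed.

Lemma dotDr w a b : size a = size b -> dot w (vadd a b) = dot w a + dot w b.
Proof. by elim: w a b => [|u w IH] [|x a] [|y b] //= [] /IH ->; ring. Qed.

Lemma dotZr w k a : dot w (vscale k a) = k * dot w a.
Proof. by elim: w a => [|u w IH] [|x a] //=; rewrite ?IH; ring. Qed.

Lemma dotZl w k a : dot (vscale k w) a = k * dot w a.
Proof. by elim: w a => [|u w IH] [|x a] //=; rewrite ?IH; ring. Qed.

Lemma dot0l n a : dot (nseq n 0) a = 0.
Proof. by elim: n a => [|n IH] [|x a] //=; rewrite IH mul0r add0r. Qed.

Lemma vadd0l a : vadd (nseq (size a) 0) a = a.
Proof. by elim: a => [|x a IH] //=; rewrite add0r IH. Qed.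

Lemma vsubK a b : size a = size b -> vadd (vsub a b) b = a.
Proof.
move=> sab; apply: (@eq_from_nth _ 0) => [|i _].
  by rewrite /vsub !size_vadd ?size_vscale.
by rewrite /vsub !(nth_vadd, nth_vscale) ?(size_vadd, size_vscale) //; ring.
Qed.

Definition lattice n (R : seq int -> Prop) :=
  R (nseq n 0) /\ forall x y k, size x = n -> size y = n ->
    R x -> R y -> R (vadd x (vscale k y)).

Definition finite_index n (R : seq int -> Prop) :=
  exists reps : seq (seq int), forall x, size x = n ->
    exists2 r, r \in reps & size r = n /\ R (vsub x r).

Lemma latticeZ n R k x : lattice n R -> size x = n -> R x -> R (vscale k x).
Proof.
move=> [R0 RD] sx Rx; have := RD _ _ k (size_nseq _ _) sx R0 Rx.
by rewrite -sx -(size_vscale k) vadd0l.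
Qed.

Lemma lattice_tail n R : lattice n.+1 R -> lattice n (fun x => R (0 :: x)).
Proof.
move=> [R0 RD]; split=> // x y k sx sy Rx Ry.
by have := RD (0 :: x) (0 :: y) k; rewrite /= mulr0 addr0 sx sy; apply.
Qed.

(* If R contains a vector with head k > 0, the representatives of Z^(n+1)/R
   are obtained from those of Z^n modulo the tail lattice by prefixing a
   remainder modulo k. *)
Lemma tail_finite_index n R k y : lattice n.+1 R -> 0 < k -> size y = n ->
  R (k :: y) -> finite_index n (fun x => R (0 :: x)) -> finite_index n.+1 R.
Proof.
move=> [R0 RD] k_gt0 sy Rky [reps Hreps].
exists [seq i%:Z :: r | i <- iota 0 `|k|%N, r <- reps].
move=> [//|j x] [sx].
pose q := (j %/ k)%Z; pose j0 := (j %% k)%Z.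
have sxq : size (vadd x (vscale (- q) y)) = n by rewrite size_vadd ?size_vscale ?sx ?sy.
have [r r_in [sr Rr]] := Hreps _ sxq.
have j0_ge0 : 0 <= j0 by rewrite modz_ge0 ?gt_eqF.
have j0_lt : j0 < k by rewrite -[X in _ < X]gtr0_norm // ltz_mod ?gt_eqF.
exists (j0 :: r).
  have -> : j0 = `|j0|%N by rewrite gez0_abs.
  apply: allpairs_f => //; rewrite mem_iota add0n -ltz_nat.
  by rewrite gez0_abs // gtz0_abs.
split; first by rewrite /= sr.
have decomp : vsub (j :: x) (j0 :: r) =
    vadd (0 :: vsub (vadd x (vscale (- q) y)) r) (vscale q (k :: y)).
  rewrite /vsub /=; congr (_ :: _).
    by rewrite /j0 {1}(divz_eq j k) -/q; ring.
  apply: (@eq_from_nth _ 0) => [|i _].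
    by rewrite !(size_vadd, size_vscale) ?sx ?sr ?sy ?sxq.
  rewrite !(nth_vadd, nth_vscale) ?(size_vadd, size_vscale) ?sx ?sr ?sy ?sxq //.
  ring.
rewrite decomp; apply: RD => //=; last by rewrite sy.
by rewrite /vsub size_vadd ?size_vscale sxq.
Qed.

(* A subgroup of Z^n of infinite index is annihilated by a nonzero integer
   functional: the integer analogue of "a proper subspace lies in a hyperplane". *)
Lemma infinite_index_annihilator n R : lattice n R -> ~ finite_index n R ->
  exists w, [/\ size w = n, 0 < dot w w & forall x, size x = n -> R x -> dot w x = 0].
Proof.
elim: n R => [|n IH] R latR infR.
  by case: infR; exists [:: [::]] => x /size0nil ->; exists [::]; case: latR.
have [[j [y [sy Rjy j_neq0]]]|headR0] :=
  pselect (exists j y, [/\ size y = n, R (j :: y) & j != 0]); last first.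
  exists (1 :: nseq n 0); split; first by rewrite /= size_nseq.
    by rewrite /= dot0l mulr1 addr0.
  move=> [//|j x] /= [sx] Rx; rewrite dot0l addr0 mul1r.
  by apply/eqP/negPn/negP => j_neq0; apply: headR0; exists j, x.
(* Make the head positive by scaling with j. *)
pose k := j * j; pose y' := vscale j y.
have k_gt0 : 0 < k by rewrite /k lt0r sqr_ge0 mulf_neq0.
have sy' : size y' = n by rewrite size_vscale.
have Rky : R (k :: y') by apply: (latticeZ j latR _ Rjy); rewrite /= sy.
have latR' := lattice_tail latR.
have [w' [sw' w'_gt0 w'R]] :=
  IH _ latR' (fun fin => infR (tail_finite_index latR k_gt0 sy' Rky fin)).
exists ((- dot w' y') :: vscale k w'); split.
- by rewrite /= size_vscale sw'.
- rewrite /= dotZl dotZr; apply: ltr_wpDl; first exact: sqr_ge0.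
  exact: (mulr_gt0 k_gt0 (mulr_gt0 k_gt0 w'_gt0)).
- move=> [//|i x] /= [sx] Rx.
  (* k (i :: x) - i (k :: y') lies in R and has head 0. *)
  have Rtail : R (0 :: vadd (vscale k x) (vscale (- i) y')).
    have sx1 : size (i :: x) = n.+1 by rewrite /= sx.
    have sky : size (k :: y') = n.+1 by rewrite /= sy'.
    have := latR.2 _ _ (- i) _ sky (latticeZ k latR sx1 Rx) Rky.
    rewrite size_vscale => /(_ sx1).
    by rewrite /= (_ : k * i + - i * k = 0) //; ring.
  have := w'R _ _ Rtail; rewrite dotDr ?dotZr ?dotZl ?size_vscale ?sx ?sy' //.
  by rewrite size_vadd ?size_vscale ?sx ?sy' // => /(_ erefl) eq0; rewrite -eq0; ring.
Qed.

End IntegerVectors.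

Local Open Scope group_scope.

Section IntegerPowers.
Variable G : groupType.
Implicit Types (x y : G) (a b : int).

Definition zpow x a : G := match a with Posz n => x ^+ n | Negz n => x ^- n.+1 end.

Lemma zpowN x a : zpow x (- a)%R = (zpow x a)^-1.
Proof. by case: a => [[|n]|n] //=; rewrite ?invg1 ?invgK. Qed.

Lemma zpowS x a : zpow x (a + 1)%R = zpow x a * x.
Proof.
case: a => [n|[|n]]; first by rewrite -PoszD addn1 /= expgSr.
  by rewrite /= expg1 mulVg.
have -> : (Negz n.+1 + 1 = Negz n)%R by rewrite !NegzE; lia.
by rewrite /= (expgS x n.+1) invMg mulgVK.
Qed.

Lemma zpowD x a b : zpow x (a + b)%R = zpow x a * zpow x b.
Proof.
have zpowDn (c : int) (n : nat) : zpow x (c + n)%R = zpow x c * zpow x n.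
  elim: n => [|n IH]; first by rewrite addr0 mulg1.
  by rewrite -addn1 PoszD addrA !zpowS IH mulgA.
case: b => [n|n]; first exact: zpowDn.
have := zpowDn (a + Negz n)%R n.+1.
by rewrite NegzE -addrA addNr addr0 => ->; rewrite zpowN mulgK.
Qed.

End IntegerPowers.

Section DerivedCongruence.
Variable Gam : groupType.
Implicit Types x y z d : Gam.

Definition cong x y := in_derived (x * y^-1).

Lemma in_derivedJ d x : in_derived d -> in_derived (x^-1 * d * x).
Proof.
move=> Hd; have -> : x^-1 * d * x = d * [~ d, x].
  by rewrite commgEl /conjg mulKVg mulgA.
exact: in_derived_mul Hd (in_derived_comm _ _).
Qed.

Lemma cong_refl x : cong x x.
Proof. by rewrite /cong mulgV; exact: in_derived_one. Qed.

Lemma cong_sym x y : cong x y -> cong y x.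
Proof. by rewrite /cong => /in_derived_inv; rewrite invMg invgK. Qed.

Lemma cong_trans x y z : cong x y -> cong y z -> cong x z.
Proof.
by rewrite /cong => Hxy Hyz; have := in_derived_mul Hxy Hyz; rewrite mulgA mulgVK.
Qed.

Lemma congM x x' y y' : cong x x' -> cong y y' -> cong (x * y) (x' * y').
Proof.
rewrite /cong => Hx Hy; have := in_derived_mul (in_derivedJ x^-1 Hy) Hx.
by rewrite invgK invMg !mulgA mulgVK.
Qed.

Lemma congV x x' : cong x x' -> cong x^-1 x'^-1.
Proof.
rewrite /cong => Hx; have := in_derivedJ x (in_derived_inv Hx).
by rewrite invMg !invgK !mulgA mulgVK.
Qed.

Lemma cong_mulC x y : cong (x * y) (y * x).
Proof.
rewrite /cong; have := in_derived_comm x^-1 y^-1.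
by rewrite /commg /conjg !invgK invMg !mulgA.
Qed.

Lemma cong1 d : cong d 1 <-> in_derived d.
Proof. by rewrite /cong invg1 mulg1. Qed.

End DerivedCongruence.

Section Homomorphisms.
Variables (Gam H : groupType) (f : Gam -> H).
Hypothesis f_hom : is_hom f.

Lemma hom1 : f 1 = 1.
Proof. by apply: (@mulIg _ (f 1)); rewrite -f_hom !mul1g. Qed.

Lemma homV x : f x^-1 = (f x)^-1.
Proof. by apply: (@mulIg _ (f x)); rewrite -f_hom !mulVg hom1. Qed.

Lemma homX x n : f (x ^+ n) = f x ^+ n.
Proof. by elim: n => [|n IH]; rewrite ?hom1 // !expgS f_hom IH. Qed.

Lemma homZ x a : f (zpow x a) = zpow (f x) a.
Proof. by case: a => n /=; rewrite ?homV homX. Qed.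

Lemma homJ x y : f (x ^ y) = f x ^ f y.
Proof. by rewrite /conjg !f_hom homV. Qed.

Lemma homR x y : f [~ x, y] = [~ f x, f y].
Proof. by rewrite /commg f_hom homV homJ. Qed.

End Homomorphisms.

Section IntegerCharacters.
Variable Gam : groupType.
Implicit Types (psi : Gam -> int) (x : Gam).

Definition int_character psi := forall x y, psi (x * y) = (psi x + psi y)%R.

Lemma character1 psi : int_character psi -> psi 1 = 0%R.
Proof. by move=> hpsi; apply: (@addrI _ (psi 1)); rewrite -hpsi !mulg1 addr0. Qed.

Lemma characterV psi x : int_character psi -> psi x^-1 = (- psi x)%R.
Proof. by move=> hpsi; apply/eqP; rewrite -subr_eq0 opprK -hpsi mulVg character1. Qed.

Lemma characterZ psi x a : int_character psi -> psi (zpow x a) = (a * psi x)%R.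
Proof.
move=> hpsi; have charX n : psi (x ^+ n) = (n%:Z * psi x)%R.
  elim: n => [|n IH]; first by rewrite mul0r character1.
  by rewrite expgS hpsi IH -addn1 PoszD; ring.
by case: a => n /=; rewrite ?characterV // charX // NegzE mulNr.
Qed.

End IntegerCharacters.

Section Words.
Variable Gam : groupType.
Implicit Types (s : seq Gam) (e : seq int) (x : Gam).

Fixpoint word s e : Gam :=
  match s, e with a :: s', k :: e' => zpow a k * word s' e' | _, _ => 1 end.

Lemma word0 s n : word s (nseq n 0%R) = 1.
Proof. by elim: n s => [|n IH] [|a s] //=; rewrite IH mulg1. Qed.

Lemma word_add s e e' : size e = size e' ->
  cong (word s (vadd e e')) (word s e * word s e').
Proof.
elim: e s e' => [|k e IH] [|a s] [|k' e'] //=; rewrite ?mulg1;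
  try (move=> *; exact: cong_refl).
case=> /IH se.
rewrite zpowD; apply: cong_trans (congM (cong_refl _) (se s)) _.
rewrite !mulgA -(mulgA _ (zpow a k') (word s e)) -(mulgA _ (word s e) (zpow a k')).
by apply: congM (cong_refl _); apply: congM (cong_refl _) (cong_mulC _ _).
Qed.

Lemma word_opp s e : cong (word s (vscale (-1) e)) (word s e)^-1.
Proof.
elim: e s => [|k e IH] [|a s] /=; rewrite ?invg1; try exact: cong_refl.
rewrite mulN1r zpowN invMg.
exact: cong_trans (congM (cong_refl _) (IH s)) (cong_mulC _ _).
Qed.

Lemma word_mem s x : x \in s -> exists2 e, size e = size s & word s e = x.
Proof.
elim: s => [|a s IH] //; rewrite inE => /predU1P[->|/IH[e se <-]].
  by exists (1%R :: nseq (size s) 0%R); rewrite /= ?size_nseq // word0 mulg1.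
by exists (0%R :: e); rewrite /= ?se // mul1g.
Qed.

Lemma gen_word s x : in_gen s x -> exists2 e, size e = size s & cong x (word s e).
Proof.
elim=> {x} [x /word_mem[e se <-]|||x y _ [e se cx] _ [e' se' cy]].
- by exists e => //; exact: cong_refl.
- by exists (nseq (size s) 0%R); rewrite ?size_nseq ?word0 //; exact: cong_refl.
- move=> x _ [e se cx]; exists (vscale (-1) e); first by rewrite size_vscale.
  exact: cong_trans (congV cx) (cong_sym (word_opp _ _)).
- have see' : size e = size e' by rewrite se se'.
  exists (vadd e e'); first by rewrite size_vadd.
  exact: cong_trans (congM cx cy) (cong_sym (word_add _ see')).
Qed.

Definition relation s e := in_derived (word s e).

Lemma relationD s e e' : size e = size e' ->
  relation s e -> relation s e' -> relation s (vadd e e').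
Proof.
move=> see' /cong1 Re /cong1 Re'; apply/cong1.
by apply: cong_trans (word_add s see') _; rewrite -(mulg1 1); apply: congM.
Qed.

Lemma relationZ s k e : relation s e -> relation s (vscale k e).
Proof.
move=> Re; have RN : relation s (vscale (-1) e).
  move/cong1: Re => /congV; rewrite invg1 => Re'.
  exact/cong1/(cong_trans (word_opp s e)).
elim/int_rect: k => [|n IH|n IH].
- by rewrite vscale0 /relation word0; exact: in_derived_one.
- rewrite -addn1 PoszD vscaleDl vscale1; apply: relationD IH Re.
  by rewrite size_vscale.
- rewrite -addn1 PoszD opprD vscaleDl; apply: relationD IH RN.
  by rewrite !size_vscale.
Qed.

Lemma relation_lattice s : lattice (size s) (relation s).
Proof.
split=> [|x y k sx sy Rx Ry]; first by rewrite /relation word0; exact: in_derived_one.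
by apply: relationD Rx (relationZ k Ry); rewrite size_vscale sx sy.
Qed.

End Words.

Section CharacterFromGenerators.
Variables (Gam : groupType) (s : seq Gam).
Hypothesis gen_s : forall x : Gam, in_gen s x.

(* A finite set of representatives of Z^n / relation s yields one of the
   abelianization. *)
Lemma relation_infinite_index :
  ~ abelianization_finite Gam -> ~ finite_index (size s) (relation s).
Proof.
move=> infAb [reps Hreps]; apply: infAb; exists (map (word s) reps) => x.
have [e se cx] := gen_word (gen_s x); have [r r_in [sr Rr]] := Hreps e se.
exists (word s r); first exact: map_f.
apply: cong_trans cx _; rewrite -(vsubK (etrans se (esym sr))).
apply: cong_trans (word_add _ _) _; first by rewrite /vsub size_vadd ?size_vscale se.
by rewrite -{2}(mul1g (word s r)); apply: congM (cong_refl _); apply/cong1.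
Qed.

Variable w : seq int.
Hypothesis w_rel : forall e, size e = size s -> relation s e -> dot w e = 0%R.

Lemma annihilator_congr e e' : size e = size s -> size e' = size s ->
  cong (word s e) (word s e') -> dot w e = dot w e'.
Proof.
move=> se se' cee'; have see' : size e = size (vscale (-1) e') by rewrite size_vscale se.
have : relation s (vsub e e').
  apply/cong1; apply: cong_trans (word_add _ see') _.
  rewrite -(mulgV (word s e')); apply: congM cee' (word_opp _ _).
move/w_rel; rewrite dotDr // dotZr mulN1r size_vadd // se => /(_ erefl) /eqP.
by rewrite subr_eq0 => /eqP.
Qed.

Definition exponents x : seq int := s2val (cid2 (gen_word (gen_s x))).

Lemma size_exponents x : size (exponents x) = size s.
Proof. exact: (s2valP (cid2 (gen_word (gen_s x)))). Qed.

Lemma cong_exponents x : cong x (word s (exponents x)).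
Proof. exact: (s2valP' (cid2 (gen_word (gen_s x)))). Qed.

Definition annihilator_character x : int := dot w (exponents x).

Lemma annihilator_characterE x e : size e = size s -> cong x (word s e) ->
  annihilator_character x = dot w e.
Proof.
move=> se cxe; apply: annihilator_congr (size_exponents x) se _.
exact: cong_trans (cong_sym (cong_exponents x)) cxe.
Qed.

Lemma annihilator_character_hom : int_character annihilator_character.
Proof.
move=> x y; have sx := size_exponents x; have sy := size_exponents y.
have sxy : size (exponents x) = size (exponents y) by rewrite sx sy.
rewrite (annihilator_characterE (e := vadd (exponents x) (exponents y))).
- by rewrite dotDr.
- by rewrite size_vadd.
apply: cong_trans (congM (cong_exponents x) (cong_exponents y)) _.
exact: cong_sym (word_add _ sxy).
Qed.

End CharacterFromGenerators.

Lemma nonzero_character (Gam : groupType) :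
  finitely_generated Gam -> ~ abelianization_finite Gam ->
  exists psi : Gam -> int, int_character psi /\ exists x, psi x != 0%R.
Proof.
move=> [s gen_s] infAb.
have [w [sw w_gt0 w_rel]] := infinite_index_annihilator (relation_lattice s)
  (relation_infinite_index gen_s infAb).
exists (annihilator_character gen_s w); split; first exact: annihilator_character_hom.
exists (word s w); rewrite (annihilator_characterE _ w_rel sw (cong_refl _)).
by rewrite gt_eqF.
Qed.

Section PrimitiveCharacter.
Variables (Gam : groupType) (psi : Gam -> int).
Hypothesis psi_hom : int_character psi.

(* The least positive value d of a nonzero character divides all its values:
   the image of psi is the subgroup dZ. *)
Lemma character_image_generator x0 : psi x0 != 0%R ->
  exists t, (0 < psi t)%R /\ forall x, (psi t %| psi x)%Z.
Proof.
move=> psi_x0.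
pose value n := (0 < n)%N && `[< exists x, psi x = Posz n >].
have value_ex : exists n, value n.
  exists `|psi x0|%N; rewrite /value absz_gt0 psi_x0; apply/asboolP.
  have [psi_x0_ge0|psi_x0_lt0] := lerP 0%R (psi x0).
    by exists x0; rewrite gez0_abs.
  by exists x0^-1; rewrite characterV // ltz0_abs.
case: (ex_minnP value_ex) => d /andP[d_gt0 /asboolP[t psi_t]] d_min.
exists t; rewrite psi_t ltz_nat; split=> // x; apply/dvdz_mod0P.
set r := (psi x %% d)%Z; pose q := (psi x %/ d)%Z.
have r_ge0 : (0 <= r)%R by rewrite modz_ge0 // eqz_nat -lt0n.
have r_lt : (r < d)%R.
  by rewrite -[X in (_ < X)%R]gtr0_norm ?ltz_mod // ?ltz_nat // eqz_nat -lt0n.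
have psi_r : psi (x * zpow t (- q)) = r.
  by rewrite psi_hom characterZ // psi_t /r {1}(divz_eq (psi x) d) -/q; ring.
apply/eqP; apply: contraTT r_lt => r_neq0; rewrite -leNgt -(gez0_abs r_ge0) lez_nat.
apply: d_min; rewrite /value absz_gt0 r_neq0; apply/asboolP.
by exists (x * zpow t (- q)); rewrite psi_r gez0_abs.
Qed.

End PrimitiveCharacter.

Lemma surjective_character (Gam : groupType) :
  finitely_generated Gam -> ~ abelianization_finite Gam ->
  exists (psi : Gam -> int) (t : Gam), int_character psi /\ psi t = 1%R.
Proof.
move=> fgGam infAb; have [psi [psi_hom [x0 psi_x0]]] := nonzero_character fgGam infAb.
have [t [psi_t_gt0 psi_t_dvd]] := character_image_generator psi_hom psi_x0.
exists (fun x => (psi x %/ psi t)%Z), t; split; last by rewrite divzz gt_eqF.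
by move=> x y /=; rewrite psi_hom divzDl.
Qed.

Section FiniteAbelianization.
Variables (Gam A : groupType) (f : Gam -> A).
Hypotheses (f_hom : is_hom f) (A_abelian : forall a b : A, commute a b).

Lemma abelian_hom_derived d : in_derived d -> f d = 1.
Proof.
elim=> {d} [x y||x _ fx1|x y _ fx1 _ fy1].
- by rewrite (homR f_hom) /commg /conjg (A_abelian (f x)) mulKg mulVg.
- exact: hom1.
- by rewrite (homV f_hom) fx1 invg1.
- by rewrite f_hom fx1 fy1 mulg1.
Qed.

Lemma abelian_hom_reps (reps : seq Gam) :
  (forall x, exists2 r, r \in reps & in_derived (x * r^-1)) ->
  forall x, exists2 r, r \in reps & f x = f r.
Proof.
move=> Hreps x; have [r r_in xr] := Hreps x; exists r => //.
by apply: divg1_eq; rewrite -(homV f_hom) -f_hom abelian_hom_derived.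
Qed.

End FiniteAbelianization.

(* If the abelianization has fewer than p elements, with p = q.+1 prime, every
   homomorphism to the cyclic group of order p is trivial: a nontrivial one
   would have p distinct values x^i, all taken on the representatives. *)
Lemma hom_to_prime_cyclic_trivial (Gam : groupType) (reps : seq Gam) q
    (f : Gam -> 'I_q.+1) :
  (forall x, exists2 r, r \in reps & in_derived (x * r^-1)) ->
  prime q.+1 -> (size reps < q.+1)%N -> is_hom f -> forall x, f x = 1.
Proof.
move=> Hreps q1_prime reps_lt f_hom x; apply/eqP; apply: contraTT reps_lt => fx_neq1.
have f_reps := abelian_hom_reps f_hom (@Zp_mulgC q) Hreps.
have order_fx : #[f x] = q.+1.
  have : #[f x] %| #|[set: 'I_q.+1]| by rewrite order_dvdG ?inE.
  rewrite cardsT card_ord => /(primeP q1_prime).2 /orP[|/eqP //].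
  by rewrite order_eq1 (negPf fx_neq1).
rewrite -leqNgt -(size_map f).
apply: (@leq_trans (size [seq f x ^+ i | i <- iota 0 q.+1])).
  by rewrite size_map size_iota.
apply: uniq_leq_size.
  rewrite map_inj_in_uniq ?iota_uniq // => i j; rewrite !mem_iota !add0n => i_lt j_lt.
  by move/eqP; rewrite eq_expg_mod_order order_fx !modn_small // => /eqP.
move=> _ /mapP[i _ ->]; rewrite -(homX f_hom); have [r r_in ->] := f_reps (x ^+ i).
exact: map_f.
Qed.

(* The divisibility property fails for the cyclic group of prime order
   p > #(abelianization), which has a single homomorphism from Gam. *)
Lemma divisibility_infinite_abelianization (Gam : groupType) :
  (forall (gT : finGroupType) (N : nat), hom_card Gam gT N -> (#|gT| %| N)%N) ->
  ~ abelianization_finite Gam.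
Proof.
move=> divides [reps Hreps].
have [p reps_lt p_prime] := prime_above (size reps).
have p_eq : p = p.-1.+1 by rewrite prednK ?prime_gt0.
rewrite p_eq in reps_lt p_prime.
have trivial := hom_to_prime_cyclic_trivial Hreps p_prime reps_lt.
have hom_card1 : hom_card Gam ('I_p.-1.+1 : finGroupType) 1.
  exists (fun _ _ => 1); split.
  - by move=> _ x y; rewrite mulg1.
  - by move=> i j _; rewrite !ord1.
  - by move=> f f_hom; exists ord0 => x; exact: trivial.
have := divides _ _ hom_card1; rewrite card_ord dvdn1 => /eqP p1_eq1.
by move: p_prime; rewrite p1_eq1.
Qed.

(* Gam is the semidirect product of K = ker psi by <t>: each x is
   t^(psi x) * k with k in K, and homomorphisms are determined by their
   restriction to K together with the image of t. *)
Section SplitCharacter.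
Variables (Gam H : groupType) (psi : Gam -> int) (t : Gam).
Hypotheses (psi_hom : int_character psi) (psi_t : psi t = 1%R).

Lemma characterJ k y : psi (k ^ y) = psi k.
Proof. by rewrite /conjg !psi_hom characterV // addrC addrK. Qed.

Lemma character_tpow a : psi (zpow t a) = a.
Proof. by rewrite characterZ // psi_t mulr1. Qed.

Definition kpart x := (zpow t (psi x))^-1 * x.

Lemma kpartE x : x = zpow t (psi x) * kpart x.
Proof. by rewrite mulKVg. Qed.

Lemma kpart_kernel x : psi (kpart x) = 0%R.
Proof. by rewrite psi_hom characterV // character_tpow addNr. Qed.

Lemma hom_ext (f f' : Gam -> H) : is_hom f -> is_hom f' ->
  (forall k, psi k = 0%R -> f k = f' k) -> f t = f' t -> f =1 f'.
Proof.
move=> f_hom f'_hom eqK eq_t x; rewrite [x]kpartE f_hom f'_hom.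
by rewrite (homZ f_hom) (homZ f'_hom) eq_t eqK // kpart_kernel.
Qed.

(* g is a legitimate image of t for f on K: conjugation by t on K is
   carried to conjugation by g. *)
Definition twisting (f : Gam -> H) (g : H) :=
  forall k, psi k = 0%R -> f (k ^ t) = f k ^ g.

Lemma twisting_zpow f g : is_hom f -> twisting f g ->
  forall a k, psi k = 0%R -> f (k ^ zpow t a) = f k ^ zpow g a.
Proof.
move=> f_hom twist_fg.
have twistX n k : psi k = 0%R -> f (k ^ t ^+ n) = f k ^ g ^+ n.
  elim: n k => [|n IH] k psi_k; first by rewrite !conjg1.
  by rewrite !expgSr !conjgM twist_fg ?characterJ // IH.
case=> n k psi_k /=; first exact: twistX.
by rewrite -{2}(conjgKV (t ^+ n.+1) k) twistX ?characterJ // conjgK.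
Qed.

Definition extension (f : Gam -> H) (g : H) x := zpow g (psi x) * f (kpart x).

Lemma extension_hom f g : is_hom f -> twisting f g -> is_hom (extension f g).
Proof.
move=> f_hom twist_fg x y; rewrite /extension.
have kpartM : kpart (x * y) = kpart x ^ zpow t (psi y) * kpart y.
  by rewrite /kpart psi_hom zpowD /conjg invMg !mulgA mulgK.
rewrite kpartM f_hom (twisting_zpow f_hom twist_fg) ?kpart_kernel // psi_hom zpowD.
by rewrite /conjg !mulgA mulgK.
Qed.

Lemma extension_kernel f g k : psi k = 0%R -> extension f g k = f k.
Proof. by move=> psi_k; rewrite /extension /kpart psi_k invg1 !mul1g. Qed.

Lemma extension_t f g : is_hom f -> extension f g t = g.
Proof. by move=> f_hom; rewrite /extension /kpart psi_t mulVg (hom1 f_hom) mulg1. Qed.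

End SplitCharacter.

Lemma double_count (A B : finType) (r : A -> B -> bool) :
  \sum_(a : A) #|[set b | r a b]| = \sum_(b : B) #|[set a | r a b]|.
Proof.
rewrite (eq_bigr (fun a => \sum_(b | r a b) 1)) => [|a _]; last by rewrite sum1dep_card.
by rewrite (exchange_big_dep predT) //=; apply: eq_bigr => b _; rewrite sum1dep_card.
Qed.

Section CountingHomomorphisms.
Variables (Gam : groupType) (gT : finGroupType) (psi : Gam -> int) (t : Gam).
Hypotheses (psi_hom : int_character psi) (psi_t : psi t = 1%R).
Variables (N : nat) (fs : 'I_N -> Gam -> gT).
Hypothesis fs_hom : forall i, is_hom (fs i).
Hypothesis fs_inj : forall i j, fs i =1 fs j -> i = j.
Hypothesis fs_surj : forall f, is_hom f -> exists i, f =1 fs i.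

Definition index_of (i0 : 'I_N) (f : Gam -> gT) :=
  odflt i0 [pick j | `[< f =1 fs j >]].

Lemma index_ofP i0 f : is_hom f -> f =1 fs (index_of i0 f).
Proof.
move=> f_hom; rewrite /index_of; case: pickP => [j /asboolP //|none].
by have [j /asboolP] := fs_surj f_hom; rewrite none.
Qed.

Lemma conj_hom (f : Gam -> gT) h : is_hom f -> is_hom (fun x => f x ^ h).
Proof. by move=> f_hom x y; rewrite f_hom conjMg. Qed.

Definition conj_on_kernel j i h := forall k, psi k = 0%R -> fs j k = fs i k ^ h.

Definition centralizer i : {set gT} :=
  [set c | `[< forall k, psi k = 0%R -> fs i k ^ c = fs i k >]].

Definition agreeing i h : {set 'I_N} := [set j | `[< conj_on_kernel j i h >]].

(* The homomorphisms agreeing with fs i on K are the extensions of fs i|K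
   sending t to c * fs i t, for c in the centralizer. *)
Lemma card_agreeing1 i : #|agreeing i 1| = #|centralizer i|.
Proof.
pose quot j := fs j t * (fs i t)^-1.
have agree1 j : j \in agreeing i 1 -> forall k, psi k = 0%R -> fs j k = fs i k.
  by rewrite inE => /asboolP agree_j k /agree_j; rewrite conjg1.
have quot_inj : {in agreeing i 1 &, injective quot}.
  move=> j j' /agree1 agree_j /agree1 agree_j' /mulIg eq_t.
  by apply: fs_inj; apply: (hom_ext psi_hom psi_t) => // k psi_k; rewrite agree_j ?agree_j'.
rewrite -(card_in_imset quot_inj); apply: eq_card => c; apply/imsetP/idP.
  move=> [j /agree1 agree_j ->]; rewrite inE; apply/asboolP => k psi_k.
  have psi_kt : psi (k ^ t) = 0%R by rewrite characterJ.
  have := agree_j _ psi_kt; rewrite !(homJ (fs_hom _)) agree_j // => eq_conj.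
  by rewrite conjgM eq_conj conjgK.
rewrite inE => /asboolP c_centr.
have twist : twisting psi t (fs i) (c * fs i t).
  by move=> k psi_k; rewrite (homJ (fs_hom i)) conjgM c_centr.
have ext_hom := extension_hom psi_hom psi_t (fs_hom i) twist.
exists (index_of i (extension psi t (fs i) (c * fs i t))).
  rewrite inE; apply/asboolP => k psi_k.
  by rewrite -index_ofP // extension_kernel // conjg1.
by rewrite /quot -index_ofP // extension_t ?mulgK.
Qed.

(* Conjugating by h is a bijection from agreeing i 1 onto agreeing i h. *)
Lemma card_agreeing i h : #|agreeing i h| = #|agreeing i 1|.
Proof.
pose conj_idx h' j := index_of i (fun x => fs j x ^ h').
have conj_idxE h' j : fs (conj_idx h' j) =1 fun x => fs j x ^ h'.
  by move=> x; rewrite -index_ofP //; exact: conj_hom.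
have conj_idxK : cancel (conj_idx h) (conj_idx h^-1).
  by move=> j; apply: fs_inj => x; rewrite !conj_idxE conjgK.
rewrite -[RHS](card_imset _ (can_inj conj_idxK)); apply: eq_card => j.
apply/idP/imsetP => [agree_j|[j' agree_j' ->]].
  exists (conj_idx h^-1 j); last first.
    by apply: fs_inj => x; rewrite !conj_idxE conjgKV.
  move: agree_j; rewrite !inE => /asboolP agree_j; apply/asboolP => k psi_k.
  by rewrite conj_idxE agree_j // conjgK conjg1.
move: agree_j'; rewrite !inE => /asboolP agree_j'; apply/asboolP => k psi_k.
by rewrite conj_idxE agree_j' // conjg1.
Qed.

Definition conj_class i : {set 'I_N} := [set j | `[< exists h, conj_on_kernel j i h >]].

(* If fs j is conjugate to fs i on K, the conjugating elements form a coset of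
   the centralizer, so there are #|centralizer i| of them. *)
Lemma card_conjugators i j :
  #|[set h | `[< conj_on_kernel j i h >]]| = ((j \in conj_class i) * #|centralizer i|)%N.
Proof.
case: (boolP (j \in conj_class i)) => [|not_conj]; last first.
  apply/eqP; rewrite mul0n cards_eq0; apply/eqP/setP => h; rewrite !inE.
  by apply/asboolP => conj_h; case/negP: not_conj; rewrite inE; apply/asboolP; exists h.
rewrite inE mul1n => /asboolP[h0 conj_h0].
rewrite -(card_rcoset _ h0); apply: eq_card => h; rewrite mem_rcoset !inE.
apply/asboolP/asboolP => [conj_h k psi_k|centr k psi_k].
  by rewrite conjgM -conj_h // conj_h0 // conjgK.
by rewrite conj_h0 // -{1}(centr k psi_k) -conjgM mulgKV.
Qed.

(* Counting the pairs (h, j) with fs j = (fs i)^h on K in two ways. *)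
Lemma card_conj_class i : #|conj_class i| = #|gT|.
Proof.
have centr_gt0 : (0 < #|centralizer i|)%N.
  by apply/card_gt0P; exists 1; rewrite inE; apply/asboolP => k _; rewrite conjg1.
apply/eqP; rewrite -(eqn_pmul2r centr_gt0); apply/eqP.
have := double_count (fun (h : gT) j => `[< conj_on_kernel j i h >]).
under eq_bigr do rewrite -/(agreeing i _) card_agreeing card_agreeing1.
rewrite sum_nat_const cardE => ->.
under eq_bigr do rewrite card_conjugators.
by rewrite -big_distrl /= -sum1_card big_mkcond.
Qed.

(* The conjugacy classes on K partition the homomorphisms into blocks of
   size #|gT|. *)
Lemma hom_count_divisible : (#|gT| %| N)%N.
Proof.
pose related i j := `[< exists h, conj_on_kernel j i h >].
have related_equiv : {in [set: 'I_N] & &, equivalence_rel related}.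
  move=> i j l _ _ _; split; first by apply/asboolP; exists 1 => k _; rewrite conjg1.
  move=> /asboolP[h conj_ij]; apply/asboolP/asboolP => [[h' conj_il]|[h' conj_jl]].
    by exists (h^-1 * h') => k psi_k; rewrite conj_il // conj_ij // -conjgM mulKVg.
  by exists (h * h') => k psi_k; rewrite conj_jl // conj_ij // conjgM.
have <- : #|[set: 'I_N]| = N by rewrite cardsT card_ord.
rewrite (card_partition (equivalence_partitionP related_equiv)).
apply: dvdn_sum => _ /imsetP[i _ ->].
have -> : [set j in [set: 'I_N] | related i j] = conj_class i by apply/setP => j; rewrite !inE.
by rewrite card_conj_class.
Qed.

End CountingHomomorphisms.

Theorem corollary3p3 (Gam : groupType) (hfg : finitely_generated Gam) :
  (forall (gT : finGroupType) (N : nat), hom_card Gam gT N -> (#|gT| %| N)%N)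
  <-> ~ abelianization_finite Gam.
Proof.
split; first exact: divisibility_infinite_abelianization.
move=> infAb gT N [fs [fs_hom fs_inj fs_surj]].
have [psi [t [psi_hom psi_t]]] := surjective_character hfg infAb.
exact: (hom_count_divisible psi_hom psi_t fs_hom fs_inj fs_surj).
Qed.
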